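(* Let $A$ be a topological ring. If the completion of $A$ is a field, then $A$ is topologically simple. If $A$ is a Huber ring whose topology is defined by an absolute value, then conversely $A$ topologically simple implies that its completion is a field.
   Context: A topological ring is topologically simple if the closure of the zero ideal is its only closed ideal (equivalently, every nonzero element of $A/\overline{(0)}$ is a topological unit, i.e. generates a dense ideal). *)

From HB Require Import structures.
From mathcomp Require Import all_boot all_order all_algebra.
From mathcomp Require Import all_classical all_reals topology.
From mathcomp Require Import Rstruct.
Set Implicit Arguments. Unset Strict Implicit. Unset Printing Implicit Defensive.
Import Order.TTheory GRing.Theory Num.Theory.
Local Open Scope classical_set_scope.
Local Open Scope ring_scope.

#[short(type="topComRingType")]
HB.structure Definition TopComRing := {A of GRing.ComNzRing A & Topological A}.

Definition is_topring (A : topComRingType) : Prop :=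
  [/\ continuous (fun x : A * A => x.1 + x.2),
      continuous (fun x : A => - x) &
      continuous (fun x : A * A => x.1 * x.2)].

Definition is_ideal (A : comNzRingType) (I : set A) : Prop :=
  [/\ I 0, (forall x y, I x -> I y -> I (x - y)) & (forall a x, I x -> I (a * x))].

(* Topologically simple: closure of (0) is the only proper closed ideal
   (and it is proper, i.e. A / closure(0) is a nonzero ring). *)
Definition top_simple (A : topComRingType) : Prop :=
  closure [set (0 : A)] <> setT /\
  forall I : set A, is_ideal I -> closed I -> I <> setT -> I = closure [set 0].

Definition is_field (B : comNzRingType) : Prop :=
  forall x : B, x <> 0 -> exists y, x * y = 1.

Definition add_cauchy (B : topComRingType) (F : set_system B) : Prop :=
  forall U : set B, nbhs (0 : B) U ->
    exists S, F S /\ forall x y, S x -> S y -> U (x - y).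

Definition add_complete (B : topComRingType) : Prop :=
  forall F : set_system B, ProperFilter F -> add_cauchy F ->
    exists l : B, F --> l.

Definition is_ring_hom (A B : comNzRingType) (i : A -> B) : Prop :=
  [/\ forall x y, i (x + y) = i x + i y,
      forall x y, i (x * y) = i x * i y & i 1 = 1].

Definition is_completion (A B : topComRingType) (i : A -> B) : Prop :=
  [/\ is_topring B, hausdorff_space B, add_complete B & is_ring_hom i] /\
  [/\ continuous i, closure (range i) = setT &
      forall (x : A) (U : set A), nbhs x U ->
        exists V : set B, nbhs (i x) V /\ i @^-1` V `<=` U].

(* Powers of the ideal I = (g) of the subring A0:
   ipow 0 = A0, ipow (n+1) = I^n * I = { sum_j c_j g_j | c_j in I^n }. *)
Fixpoint ipow (A : comNzRingType) (A0 : set A) (g : seq A) (n : nat) : set A :=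
  match n with
  | 0%N => A0
  | n.+1 => [set x | exists c : 'I_(size g) -> A,
              (forall j, ipow A0 g n (c j)) /\ x = \sum_(j < size g) c j * g`_j]
  end.

Definition is_subring (A : comNzRingType) (A0 : set A) : Prop :=
  [/\ A0 1, (forall x y, A0 x -> A0 y -> A0 (x - y)) &
      (forall x y, A0 x -> A0 y -> A0 (x * y))].

(* Huber ring: there is an open subring A0 and a finitely generated ideal
   I of A0 such that the powers I^n form a basis of neighbourhoods of 0. *)
Definition is_huber (A : topComRingType) : Prop :=
  is_topring A /\
  exists (A0 : set A) (g : seq A),
    [/\ open A0, is_subring A0, all (fun a => `[< A0 a >]) g,
        (forall n, nbhs (0 : A) (ipow A0 g n)) &
        (forall U, nbhs (0 : A) U -> exists n, ipow A0 g n `<=` U)].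

Definition abs_topology (A : topComRingType) : Prop :=
  exists v : A -> Rdefinitions.R,
    [/\ forall x, 0 <= v x, forall x, v x = 0 <-> x = 0,
        forall x y, v (x * y) = v x * v y,
        forall x y, v (x + y) <= v x + v y &
        forall (x : A) (U : set A),
          nbhs x U <-> exists2 e : Rdefinitions.R, 0 < e &
                         forall y, v (y - x) < e -> U y].

From HB Require Import structures.
From mathcomp Require Import all_boot all_order all_algebra.
From mathcomp Require Import all_classical all_reals topology.
From mathcomp Require Import lra ring Rstruct.
Import Order.TTheory GRing.Theory Num.Theory.
Local Open Scope classical_set_scope.
Local Open Scope ring_scope.
Set Implicit Arguments. Unset Strict Implicit. Unset Printing Implicit Defensive.

(* If the completion B of A is a field and a closed ideal I of A contains some x
   with i x <> 0, pick y with i x * y = 1 and elements a of A with i a close to y: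
   then a x lies in I and i (a x) is close to 1.  Since A carries the topology
   induced from B, 1 lies in the closure of I, hence in I.  So every proper
   closed ideal lies in the kernel of i, which is the closure of (0).

   Conversely, let v be an absolute value defining the topology of A and let
   b <> 0 in B.  Near b, the elements x of A satisfy v x >= d > 0.  Top-simplicity
   makes x A dense, so x has approximate inverses c with v (1 - x c) small, and
   for x, x' close to b their approximate inverses are close to each other.
   The images i c therefore form an additively Cauchy filter; its limit z
   satisfies b z = 1 by continuity of multiplication. *)

Lemma continuous2_nbhs (T U : topologicalType) (f : T * T -> U) :
  continuous f -> forall (a b : T) (W : set U), nbhs (f (a, b)) W ->
  exists N1 N2, [/\ nbhs a N1, nbhs b N2 & forall x y, N1 x -> N2 y -> W (f (x, y))].
Proof.
move=> fC a b W /(fC (a, b)) [[P Q] /= [Pa Qb] PQW].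
by exists P, Q; split => // x y Px Qy; exact: (PQW (x, y)).
Qed.

Section RingHom.
Variables (A B : comNzRingType) (i : A -> B).
Hypothesis hi : is_ring_hom i.

Lemma ring_hom0 : i 0 = 0.
Proof. by case: hi => iD _ _; apply/(@addrI _ (i 0)); rewrite -iD !addr0. Qed.

Lemma ring_homN x : i (- x) = - i x.
Proof.
by case: hi => iD _ _; apply/(@addrI _ (i x)); rewrite -iD !subrr ring_hom0.
Qed.

Lemma ring_homB x y : i (x - y) = i x - i y.
Proof. by case: hi => iD _ _; rewrite iD ring_homN. Qed.

End RingHom.

Section Completion.
Variables (A B : topComRingType) (i : A -> B).
Hypothesis hc : is_completion i.

Lemma completion_closure_image (S : set A) a :
  closure (i @` S) (i a) -> closure S a.
Proof.
case: hc => _ [_ _ iemb] iSa U /(iemb a) [V [Vi VU]].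
have [_ [[x Sx <-] Vx]] := iSa V Vi.
by exists x; split => //; exact: VU.
Qed.

Lemma completion_closure0 a : closure [set 0] a <-> i a = 0.
Proof.
have [[_ Bsep _ hi] [iC _ _]] := hc.
split=> [a0 | ia0].
- apply: Bsep => P Q /(iC a) Pi Q0.
  have [_ [/= -> P0]] := a0 _ Pi.
  by exists 0; split; [rewrite -(ring_hom0 hi) | exact: nbhs_singleton].
- apply: completion_closure_image => V Vi; exists (i a); split => //.
    by exists 0 => //; rewrite ia0 ring_hom0.
  exact: nbhs_singleton.
Qed.

Lemma completion_closure0_neqT : closure [set (0 : A)] <> setT.
Proof.
have [[_ _ _ [_ _ i1]] _] := hc.
move=> cl0T; have /completion_closure0 : closure [set 0] (1 : A) by rewrite cl0T.
by rewrite i1; apply/eqP; exact: oner_neq0.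
Qed.

Lemma closed_ideal_unit_image (I : set A) x y :
  is_ideal I -> closed I -> I x -> i x * y = 1 -> I 1.
Proof.
have [[[_ _ Bmul] _ _ [_ iM i1]] [_ idense _]] := hc.
move=> [_ _ IM] Icl Ix xy1; apply: Icl; apply: completion_closure_image.
rewrite i1 => W; rewrite -xy1 mulrC => /(continuous2_nbhs Bmul) [N1 [N2 [N1y N2x N12W]]].
have : closure (range i) y by rewrite idense.
case/(_ N1 N1y) => _ [[b _ <-] N1b].
exists (i (b * x)); split; first by exists (b * x) => //; exact: IM.
by rewrite iM; apply: N12W N1b _; exact: nbhs_singleton.
Qed.

End Completion.

Lemma field_completion_top_simple (A B : topComRingType) (i : A -> B) :
  is_completion i -> is_field B -> top_simple A.
Proof.
move=> hc Bfield; split; first exact: completion_closure0_neqT hc.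
move=> I Iideal Icl IT.
have Iker x : I x -> i x = 0.
  move=> Ix; apply: contrapT => /Bfield [y xy1]; apply: IT.
  have I1 : I 1 := closed_ideal_unit_image hc Iideal Icl Ix xy1.
  case: Iideal => _ _ IM; apply/seteqP; split => // a _.
  by rewrite -[a]mulr1; exact: IM.
apply/seteqP; split => x; first by move/Iker/(completion_closure0 hc).
have I0 : [set 0] `<=` I by case: Iideal => I0 _ _ _ ->.
by move=> /(closureS I0); exact: Icl.
Qed.

Notation R := Rdefinitions.R.

Definition is_absolute_value (A : comNzRingType) (v : A -> R) :=
  [/\ forall x, 0 <= v x, forall x, v x = 0 <-> x = 0,
      forall x y, v (x * y) = v x * v y &
      forall x y, v (x + y) <= v x + v y].

Section AbsoluteValue.
Variables (A : comNzRingType) (v : A -> R).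
Hypothesis hv : is_absolute_value v.

Lemma absv1 : v 1 = 1.
Proof.
case: hv => v_ge0 v_eq0 vM _.
have v11 : v 1 * v 1 = v 1 by rewrite -vM mulr1.
have v1_neq0 : v 1 <> 0 by move/v_eq0; apply/eqP; exact: oner_neq0.
by have := v_ge0 1; nra.
Qed.

Lemma absvN x : v (- x) = v x.
Proof.
case: hv => v_ge0 _ vM _.
have vN1sq : v (-1) * v (-1) = 1 by rewrite -vM mulrNN mulr1 absv1.
have vN1 : v (-1) = 1 by have := v_ge0 (-1); nra.
by rewrite -mulN1r vM vN1 mul1r.
Qed.

Lemma absv_subC x y : v (x - y) = v (y - x).
Proof. by rewrite -absvN opprB. Qed.

Lemma absvD3 x y z : v (x + y + z) <= v x + v y + v z.
Proof. by case: hv => _ _ _ vD; have := vD (x + y) z; have := vD x y; lra. Qed.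

(* Approximate inverses of nearby elements bounded below by d are close:
   x (c - c') = (x c - 1) + (1 - x' c') + (x' - x) c', and v c' < 2 / d. *)
Lemma absv_approx_inv_close (d t : R) x x' c c' : 0 < d -> t <= 1 ->
  d <= v x -> d <= v x' -> v (x - x') < t ->
  v (1 - x * c) < t -> v (1 - x' * c') < t ->
  d * d * v (c - c') < 2 * t * d + 2 * t.
Proof.
move=> d_gt0 t_le1 dx dx' xx' xc x'c'.
case: (hv) => v_ge0 _ vM vD.
have vx'c' : v (x' * c') < 2.
  have := vD 1 (- (1 - x' * c')); rewrite absvN absv1.
  have -> : 1 + - (1 - x' * c') = x' * c' by ring.
  lra.
have dc' : d * v c' < 2 by rewrite vM in vx'c'; have := v_ge0 c'; nra.
have vxcc' : v x * v (c - c') <= t + t + v (x - x') * v c'.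
  rewrite -vM.
  have -> : x * (c - c') = (x * c - 1) + (1 - x' * c') + (x' - x) * c' by ring.
  have := absvD3 (x * c - 1) (1 - x' * c') ((x' - x) * c').
  rewrite vM (absv_subC x' x) (absv_subC _ 1); lra.
have dcc' : d * v (c - c') <= v x * v (c - c') by have := v_ge0 (c - c'); nra.
have xx'c' : v (x - x') * (d * v c') <= v (x - x') * 2 by have := v_ge0 (x - x'); nra.
by have := v_ge0 (c - c'); have := v_ge0 (x - x'); nra.
Qed.

End AbsoluteValue.

Definition abs_nbhs (A : topComRingType) (v : A -> R) :=
  forall (x : A) (U : set A),
    nbhs x U <-> exists2 e : R, 0 < e & forall y, v (y - x) < e -> U y.

Section AbsTopology.
Variables (A : topComRingType) (v : A -> R).
Hypotheses (hv : is_absolute_value v) (hnb : abs_nbhs v).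

Lemma abs_closureP (S : set A) y :
  closure S y <-> forall e : R, 0 < e -> exists w, S w /\ v (w - y) < e.
Proof.
split=> [Sy e e_gt0 | Sy U /hnb [e e_gt0 eU]].
  have yN : nbhs y [set w | v (w - y) < e] by apply/hnb; exists e.
  by have [w [Sw yw]] := Sy _ yN; exists w.
by have [w [Sw yw]] := Sy e e_gt0; exists w; split => //; exact: eU.
Qed.

Lemma abs_closure0 : closure [set (0 : A)] = [set 0].
Proof.
apply/seteqP; split => [x /abs_closureP x0 | x ->]; last exact: subset_closure.
case: hv => v_ge0 v_eq0 _ _; apply: contrapT => x_neq0.
have vx_gt0 : 0 < v x by rewrite lt_neqAle eq_sym v_ge0 andbT; apply/eqP => /v_eq0.
have [_ [-> ]] := x0 _ vx_gt0.
by rewrite sub0r absvN // ltxx.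
Qed.

Lemma abs_closure_ideal (I : set A) : is_ideal I -> is_ideal (closure I).
Proof.
case: (hv) => v_ge0 _ vM vD [I0 IB IM]; split.
- exact: subset_closure.
- move=> y1 y2 /abs_closureP Iy1 /abs_closureP Iy2; apply/abs_closureP => e e_gt0.
  have e2_gt0 : 0 < e / 2 by rewrite divr_gt0.
  have [w1 [Iw1 y1w1]] := Iy1 _ e2_gt0; have [w2 [Iw2 y2w2]] := Iy2 _ e2_gt0.
  exists (w1 - w2); split; first exact: IB.
  have -> : w1 - w2 - (y1 - y2) = (w1 - y1) + - (w2 - y2) by ring.
  by have := vD (w1 - y1) (- (w2 - y2)); rewrite absvN //; lra.
- move=> a y /abs_closureP Iy; apply/abs_closureP => e e_gt0.
  have va1_gt0 : 0 < v a + 1 by have := v_ge0 a; lra.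
  have [w [Iw yw]] := Iy _ (divr_gt0 e_gt0 va1_gt0).
  exists (a * w); split; first exact: IM.
  have -> : a * w - a * y = a * (w - y) by ring.
  rewrite vM; move: yw; rewrite ltr_pdivlMr // => yw.
  by have := v_ge0 (w - y); have := v_ge0 a; nra.
Qed.

Lemma top_simple_approx_inv : top_simple A ->
  forall x : A, x <> 0 -> forall e : R, 0 < e -> exists c, v (1 - x * c) < e.
Proof.
move=> [_ Asimple] x x_neq0 e e_gt0.
pose xA := [set y | exists a, y = x * a].
have xA_ideal : is_ideal xA.
  split; first by exists 0; rewrite mulr0.
    by move=> _ _ [a ->] [b ->]; exists (a - b); rewrite mulrBr.
  by move=> c _ [a ->]; exists (c * a); rewrite mulrCA.
have xA_dense : closure xA = setT.
  apply: contrapT => xAT; apply: x_neq0.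
  have : closure xA x by apply: subset_closure; exists 1; rewrite mulr1.
  rewrite (Asimple _ (abs_closure_ideal xA_ideal)) ?abs_closure0 //.
  exact: closed_closure.
have /abs_closureP/(_ e e_gt0) [_ [[c ->] xc]] : closure xA 1 by rewrite xA_dense.
by exists c; rewrite absv_subC.
Qed.

End AbsTopology.

Section InverseInCompletion.
Variables (A : topComRingType) (v : A -> R).
Hypotheses (hv : is_absolute_value v) (hnb : abs_nbhs v) (hts : top_simple A).
Variables (B : topComRingType) (i : A -> B).
Hypothesis hc : is_completion i.

Lemma completion_abs_bounded_below (b : B) : b <> 0 ->
  exists Nb (d : R), [/\ nbhs b Nb, 0 < d & forall x, Nb (i x) -> d <= v x].
Proof.
have [[_ Bsep _ hi] [iC _ _]] := hc.
move=> b_neq0.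
have [Nb [M [Nbb M0 NbM]]] : exists Nb M, [/\ nbhs b Nb, nbhs (0 : B) M &
    forall y, Nb y -> M y -> False].
  apply: contrapT => NbM; apply: b_neq0; apply: Bsep => P Q Pb Q0.
  apply: contrapT => PQ; apply: NbM; exists P, Q; split => // y Py Qy.
  by apply: PQ; exists y.
have [d d_gt0 dM] : exists2 d : R, 0 < d & forall y, v (y - 0) < d -> M (i y).
  by apply/hnb; apply: iC; rewrite ring_hom0.
exists Nb, d; split => // x Nbx; rewrite leNgt; apply/negP => vx_lt.
by apply: NbM Nbx _; apply: dM; rewrite subr0.
Qed.

Lemma completion_abs_cauchy (b : B) (eta : R) : 0 < eta ->
  exists N, nbhs b N /\ forall x x', N (i x) -> N (i x') -> v (x - x') < eta.
Proof.
have [[[Badd Bopp _] _ _ hi] [_ _ iemb]] := hc.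
move=> eta_gt0.
have : nbhs (0 : A) [set y | v (y - 0) < eta] by apply/hnb; exists eta.
move=> /iemb [V [V0 Veta]]; rewrite ring_hom0 // in V0.
have /(continuous2_nbhs Badd) [N1 [N2 [N1b N2b N12V]]] :
  nbhs ((fun p : B * B => p.1 + p.2) (b, - b)) V by rewrite /= subrr.
exists (N1 `&` (fun y => N2 (- y))); split; first exact: filterI N1b (Bopp b _ N2b).
move=> x x' [N1x _] [_ N2x']; have := Veta (x - x'); rewrite /= subr0; apply.
by rewrite ring_homB //; exact: N12V.
Qed.

Variables (b : B) (Nb : set B) (d : R).
Hypotheses (Nbb : nbhs b Nb) (d_gt0 : 0 < d) (Nb_low : forall x, Nb (i x) -> d <= v x).

Definition approx_inv (N : set B) (e : R) : set A :=
  [set c | exists x, N (i x) /\ v (1 - x * c) < e].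

Definition inv_filter : set_system B := fun Y => exists N e,
  [/\ nbhs b N, 0 < e & forall c, approx_inv N e c -> Y (i c)].

Lemma approx_inv_nonempty N e : nbhs b N -> 0 < e -> exists c, approx_inv N e c.
Proof.
have [_ [_ idense _]] := hc.
move=> bN e_gt0; have : closure (range i) b by rewrite idense.
case/(_ _ (filterI bN Nbb)) => _ [[x _ <-] [Nx Nbx]].
have x_neq0 : x <> 0.
  move=> x0; have := Nb_low Nbx; rewrite x0.
  have -> : v 0 = 0 by case: hv => _ v_eq0 _ _; exact/v_eq0.
  by rewrite leNgt d_gt0.
have [c xc] := top_simple_approx_inv hv hnb hts x_neq0 e_gt0.
by exists c, x.
Qed.

Lemma inv_filter_proper : ProperFilter inv_filter.
Proof.
constructor.
  case=> N [e [bN e_gt0 NeY]].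
  by have [c Nec] := approx_inv_nonempty bN e_gt0; exact: NeY Nec.
constructor.
- by exists setT, 1; split; [exact: filterT | exact: ltr01 | by []].
- move=> Y1 Y2 [N1 [e1 [N1b e1_gt0 N1Y]]] [N2 [e2 [N2b e2_gt0 N2Y]]].
  exists (N1 `&` N2), (Order.min e1 e2); split; first exact: filterI.
    by rewrite lt_min e1_gt0 e2_gt0.
  move=> c [x [[N1x N2x]]]; rewrite lt_min => /andP [xc1 xc2].
  by split; [apply: N1Y; exists x | apply: N2Y; exists x].
- move=> P Q PQ [N [e [bN e_gt0 NeP]]]; exists N, e; split => // c Nec.
  exact/PQ/NeP.
Qed.

Lemma inv_filter_cauchy : add_cauchy inv_filter.
Proof.
have [[_ _ _ hi] [iC _ _]] := hc.
move=> U U0.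
have : nbhs (0 : A) (i @^-1` U) by apply: iC; rewrite ring_hom0.
move=> /hnb [e e_gt0 eU].
(* choose t with 2 t d + 2 t < d^2 e, i.e. t (2 d + 2 + d^2 e) = d^2 e *)
pose D := 2 * d + 2 + d * d * e.
have dde_gt0 : 0 < d * d * e by rewrite !mulr_gt0.
have D_gt0 : 0 < D by rewrite /D; move: d_gt0; lra.
pose t := d * d * e / D.
have tD : t * D = d * d * e by rewrite /t mulfVK // gt_eqF.
have t_gt0 : 0 < t by rewrite /t divr_gt0.
have t_le1 : t <= 1 by rewrite /t ler_pdivrMr // mul1r /D; move: d_gt0; lra.
have [N [bN Nt]] := completion_abs_cauchy b t_gt0.
exists (i @` approx_inv (N `&` Nb) t); split.
  by exists (N `&` Nb), t; split => //; exact: filterI.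
move=> _ _ [c [x [[Nx Nbx] xc]] <-] [c' [x' [[Nx' Nbx'] x'c']] <-].
rewrite -ring_homB //; apply: eU; rewrite subr0.
have := absv_approx_inv_close hv d_gt0 t_le1 (Nb_low Nbx) (Nb_low Nbx')
  (Nt _ _ Nx Nx') xc x'c'.
have dd_gt0 : 0 < d * d by exact: mulr_gt0.
case: hv => v_ge0 _ _ _ cc'; rewrite -(ltr_pM2l dd_gt0) -tD /D.
by have := v_ge0 (c - c'); move: t_gt0 d_gt0; nra.
Qed.

Lemma inv_filter_limit_inverse z : inv_filter --> z -> b * z = 1.
Proof.
have [[[_ _ Bmul] Bsep _ [_ iM i1]] [iC _ _]] := hc.
move=> Fz; apply: Bsep => P Q bzP Q1.
have [N1 [N2 [N1b N2z N12P]]] := continuous2_nbhs Bmul bzP.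
have [N [e [bN e_gt0 NeN2]]] : inv_filter N2 by exact: Fz.
have : nbhs (1 : A) (i @^-1` Q) by apply: iC; rewrite i1.
move=> /hnb [e1 e1_gt0 e1Q].
have min_gt0 : 0 < Order.min e e1 by rewrite lt_min e_gt0 e1_gt0.
have [c [x [[Nx N1x]]]] := approx_inv_nonempty (filterI bN N1b) min_gt0.
rewrite lt_min => /andP [xce xce1].
exists (i (x * c)); split; last by apply: e1Q; rewrite absv_subC.
by rewrite iM; apply: N12P N1x _; apply: NeN2; exists x.
Qed.

End InverseInCompletion.

Lemma abs_top_simple_completion_field (A : topComRingType) (v : A -> R) :
  is_absolute_value v -> abs_nbhs v -> top_simple A ->
  forall (B : topComRingType) (i : A -> B), is_completion i -> is_field B.
Proof.
move=> hv hnb hts B i hc b b_neq0.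
have [Nb [d [Nbb d_gt0 Nb_low]]] := completion_abs_bounded_below hnb hc b_neq0.
have [[_ _ Bcomplete _] _] := hc.
have [z Fz] := Bcomplete _ (inv_filter_proper hv hnb hts hc Nbb d_gt0 Nb_low)
  (inv_filter_cauchy hv hnb hc Nbb d_gt0 Nb_low).
by exists z; exact: (inv_filter_limit_inverse hv hnb hts hc Nbb d_gt0 Nb_low Fz).
Qed.

Theorem lemma4p8 (A : topComRingType) (hA : is_topring A) :
  (forall (B : topComRingType) (i : A -> B),
      is_completion i -> is_field B -> top_simple A) /\
  (is_huber A -> abs_topology A -> top_simple A ->
   forall (B : topComRingType) (i : A -> B),
      is_completion i -> is_field B).
Proof.
split=> [B i|]; first exact: field_completion_top_simple.
move=> _ [v [v_ge0 v_eq0 vM vD vnbhs]] hts.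
by apply: (@abs_top_simple_completion_field A v) => //; split.
Qed.
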